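(* For every integer $t$ there exists a finite simple graph $G$ with $\Delta_2(G) \geq t$ and $\chi(G) > \max\{\omega(G), \Delta_2(G)\}$.
   Context: $\chi(G)$ is the chromatic number and $\omega(G)$ the clique number. $\Delta_2(G)$ is the largest degree that a vertex $v$ of $G$ can have subject to the condition that $v$ is adjacent to a vertex whose degree is at least as large as the degree of $v$. *)

From mathcomp Require Import all_boot all_order all_algebra.
Set Implicit Arguments. Unset Strict Implicit. Unset Printing Implicit Defensive.

Definition simple_graph (T : finType) (e : rel T) : Prop :=
  symmetric e /\ irreflexive e.

Definition deg (T : finType) (e : rel T) (v : T) : nat := #|[set u | e v u]|.

(* Delta_2(G): largest degree of a vertex v adjacent to some u with
   deg u >= deg v (0 if there is no such vertex, i.e. G edgeless). *)
Definition Delta2 (T : finType) (e : rel T) : nat :=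
  \max_(v : T | [exists u, e v u && (deg e v <= deg e u)]) deg e v.

Definition is_clique (T : finType) (e : rel T) (A : {set T}) : bool :=
  [forall x in A, forall y in A, (x != y) ==> e x y].

Definition omega (T : finType) (e : rel T) : nat :=
  \max_(A : {set T} | is_clique e A) #|A|.

Definition proper_coloring (T : finType) (e : rel T) (k : nat)
  (c : {ffun T -> 'I_k}) : bool :=
  [forall x, forall y, e x y ==> (c x != c y)].

Definition colorable (T : finType) (e : rel T) (k : nat) : bool :=
  [exists c : {ffun T -> 'I_k}, proper_coloring e c].

(* least k admitting a proper k-colouring (#|T| colours always suffice
   for a simple graph, so the default #|T| is never spuriously reached). *)
Definition chi (T : finType) (e : rel T) : nat :=
  \big[minn/#|T|]_(k < #|T|.+1 | colorable e k) k.

From mathcomp Require Import all_boot all_order all_algebra zify.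
Set Implicit Arguments. Unset Strict Implicit. Unset Printing Implicit Defensive.

(* Take two cliques L and R on n+1 vertices with distinguished vertices l* and
   r*, join l* to r*, and add a hub adjacent to every other clique vertex.
   Every clique vertex has degree n+1 and the hub's neighbours are clique
   vertices, so Delta_2 = n+1, and a clique has at most n+1 vertices unless it
   is the edge l*r*.  An (n+1)-colouring uses every colour on L and on R, so
   the hub's colour, missing from L - l* and R - r*, is that of both l* and r*,
   which are adjacent: chi >= n+2. *)

Section GraphInvariants.
Variables (T : finType) (e : rel T).

Lemma proper_coloringP k (c : {ffun T -> 'I_k}) :
  reflect (forall x y, e x y -> c x != c y) (proper_coloring e c).
Proof.
apply: (iffP forallP) => [H x y exy | H x]; first by have /forallP/(_ y) := H x; rewrite exy.
by apply/forallP => y; apply/implyP/H.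
Qed.

Lemma is_cliqueP (A : {set T}) :
  reflect {in A &, forall x y, x != y -> e x y} (is_clique e A).
Proof.
apply: (iffP forall_inP) => [H x y xA yA | H x xA].
  by have /forall_inP/(_ y yA)/implyP := H x xA.
by apply/forall_inP => y yA; apply/implyP/H.
Qed.

Lemma leq_Delta2 v u : e v u -> deg e v <= deg e u -> deg e v <= Delta2 e.
Proof.
move=> evu le_vu; apply: (leq_bigmax_cond (F := fun v => deg e v)).
by apply/existsP; exists u; rewrite evu.
Qed.

Lemma Delta2_le_edge_min d :
  (forall v u, e v u -> minn (deg e v) (deg e u) <= d) -> Delta2 e <= d.
Proof.
move=> Hd; apply/bigmax_leqP => v /existsP [u /andP [evu le_vu]].
by have := Hd v u evu; rewrite (minn_idPl le_vu).
Qed.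

Lemma clique_card_le k (c : T -> 'I_k) A :
  is_clique e A -> {in A &, forall x y, e x y -> c x != c y} -> #|A| <= k.
Proof.
move=> /is_cliqueP clA sepA; rewrite -(card_in_imset (f := c)).
  by apply: leq_trans (max_card _) _; rewrite card_ord.
move=> x y xA yA; apply: contra_eq => neq.
exact: sepA (clA x y xA yA neq).
Qed.

Lemma leq_chi m :
  m <= #|T| -> (forall k, colorable e k -> m <= k) -> m <= chi e.
Proof.
move=> leT Hm; apply: (big_ind (fun x => m <= x)) => // [x y|k /Hm //].
by rewrite leq_min => -> ->.
Qed.

End GraphInvariants.

Lemma card_option_pred (A : finType) (P : pred (option A)) :
  #|P| = P None + #|[pred a | P (Some a)]|.
Proof.
have SomeI : injective (@Some A) by move=> ? ? [].
rewrite (cardD1 None) -(card_image SomeI); congr (_ + _).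
apply: eq_card => -[a|]; rewrite !inE /=.
  by rewrite (mem_image SomeI).
by symmetry; apply/negbTE/imageP => -[].
Qed.

Lemma card_sum_pred (A B : finType) (P : pred (A + B)) :
  #|P| = #|[pred a | P (inl a)]| + #|[pred b | P (inr b)]|.
Proof.
have inlI : injective (@inl A B) by move=> ? ? [].
have inrI : injective (@inr A B) by move=> ? ? [].
rewrite -(cardID [pred x : A + B | if x is inl _ then true else false] P).
rewrite -(card_image inlI) -(card_image inrI).
congr (_ + _); apply: eq_card => -[a|b]; rewrite !inE ?andbT ?andbF /=.
- by rewrite (mem_image inlI).
- by symmetry; apply/negbTE/imageP => -[].
- by symmetry; apply/negbTE/imageP => -[].
- by rewrite (mem_image inrI).
Qed.

Section HubGraph.
Variable n : nat.

Definition hub_vertex := option ('I_n.+1 + 'I_n.+1)%type.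

Local Notation hub := (@None ('I_n.+1 + 'I_n.+1)).
Local Notation lft i := (Some (@inl _ 'I_n.+1 i)).
Local Notation rgt i := (Some (@inr 'I_n.+1 _ i)).
Local Notation mx := (@ord_max n).

Definition hub_adj (x y : hub_vertex) : bool :=
  match x, y with
  | None, Some (inl j) | None, Some (inr j) => j != mx
  | Some (inl i), None | Some (inr i), None => i != mx
  | Some (inl i), Some (inl j) | Some (inr i), Some (inr j) => i != j
  | Some (inl i), Some (inr j) | Some (inr i), Some (inl j) => (i == mx) && (j == mx)
  | None, None => false
  end.

Lemma hub_adj_simple : simple_graph hub_adj.
Proof.
split; first by move=> [[i|i]|] [[j|j]|] //=; rewrite ?(eq_sym i) // andbC.
by move=> [[i|i]|] //=; rewrite eqxx.
Qed.

Lemma deg_hub_adj_side s : deg hub_adj (Some s) = n.+1.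
Proof.
rewrite /deg cardsE card_option_pred card_sum_pred.
have card_eq_mx (i : 'I_n.+1) : #|[pred j : 'I_n.+1 | (i == mx) && (j == mx)]| = (i == mx).
  by case: (i == mx); rewrite ?card1 ?card0.
have card_neq (i : 'I_n.+1) : #|[pred j : 'I_n.+1 | i != j]| = n.
  by rewrite (eq_card (B := predC1 i)) ?cardC1 ?card_ord // => j; rewrite !inE eq_sym.
by case: s => i /=; rewrite card_eq_mx card_neq; case: (i == mx); rewrite /= ?addn0 ?addn1.
Qed.

Lemma Delta2_hub_adj : 0 < n -> Delta2 hub_adj = n.+1.
Proof.
move=> n_gt0; apply/eqP; rewrite eqn_leq; apply/andP; split.
  apply: Delta2_le_edge_min => -[s|] [t|] //= _;
  by rewrite deg_hub_adj_side ?geq_minl ?geq_minr.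
rewrite -{1}(deg_hub_adj_side (inl ord0)).
apply: (@leq_Delta2 _ _ _ (lft mx)); last by rewrite !deg_hub_adj_side.
by rewrite /= -(inj_eq val_inj) /= eq_sym -lt0n.
Qed.

Lemma hub_color_on_side (side : 'I_n.+1 -> 'I_n.+1 + 'I_n.+1) k
    (c : {ffun hub_vertex -> 'I_k}) :
    (forall i j, hub_adj (Some (side i)) (Some (side j)) = (i != j)) ->
    (forall i, hub_adj hub (Some (side i)) = (i != mx)) ->
  k <= n.+1 -> proper_coloring hub_adj c -> c hub = c (Some (side mx)).
Proof.
move=> adj_side adj_hub le_k /proper_coloringP c_proper.
have inj_side : injective (fun i => c (Some (side i))).
  by move=> i j; apply: contra_eq => neq; apply: c_proper; rewrite adj_side.
have /codomP [i c_hub] : c hub \in codom (fun i => c (Some (side i))).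
  by apply: inj_card_onto inj_side _ _; rewrite !card_ord.
suff i_mx : i = mx by rewrite c_hub i_mx.
by move: c_hub; apply: contra_eq => neq; apply: c_proper; rewrite adj_hub.
Qed.

Lemma colorable_hub_adj k : colorable hub_adj k -> n.+2 <= k.
Proof.
case/existsP => c c_proper; rewrite ltnNge; apply/negP => le_k.
have c_left := @hub_color_on_side inl k c (fun _ _ => erefl) (fun _ => erefl) le_k c_proper.
have c_right := @hub_color_on_side inr k c (fun _ _ => erefl) (fun _ => erefl) le_k c_proper.
move/proper_coloringP: c_proper => /(_ (lft mx) (rgt mx)).
by rewrite -c_left -c_right /= !eqxx => /(_ isT).
Qed.

Lemma chi_hub_adj : n.+2 <= chi hub_adj.
Proof.
apply: leq_chi; last exact: colorable_hub_adj.
by rewrite card_option card_sum !card_ord; lia.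
Qed.

(* An (n+1)-colouring that is proper except on the edge l* r*. *)
Definition side_index (x : hub_vertex) : 'I_n.+1 :=
  match x with None => mx | Some (inl i) | Some (inr i) => i end.

Lemma side_index_conflict x y :
  hub_adj x y -> side_index x = side_index y -> [set x; y] = [set lft mx; rgt mx].
Proof.
case: x => [[i|i]|]; case: y => [[j|j]|] //= + eq_ij; subst; rewrite ?eqxx //=.
  by case/andP => /eqP ->.
by case/andP => /eqP ->; rewrite setUC.
Qed.

Lemma no_common_neighbour_bridge x : ~~ (hub_adj x (lft mx) && hub_adj x (rgt mx)).
Proof. by case: x => [[j|j]|] /=; rewrite ?eqxx //; case: eqP. Qed.

Lemma omega_hub_adj : 0 < n -> omega hub_adj <= n.+1.
Proof.
move=> n_gt0; apply/bigmax_leqP => A clA; have /is_cliqueP adjA := clA.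
have [/andP [lA rA] | not_both] := boolP ((lft mx \in A) && (rgt mx \in A)).
  have sub : A \subset [set lft mx; rgt mx].
    apply/subsetP => x xA; rewrite !inE; apply: contraT; rewrite negb_or => /andP [nl nr].
    by have := no_common_neighbour_bridge x; rewrite adjA ?adjA.
  by apply: leq_trans (subset_leq_card sub) _; rewrite cards2; case: eqP.
apply: (clique_card_le (c := side_index)) clA _ => x y xA yA xy.
apply/eqP => /(side_index_conflict xy) same.
have : [set x; y] \subset A by rewrite subUset !sub1set xA yA.
by rewrite same subUset !sub1set => /andP [lA rA]; rewrite lA rA in not_both.
Qed.

End HubGraph.

Import Order.TTheory GRing.Theory Num.Theory.
Local Open Scope ring_scope.

Theorem mainTheorem7 :
  forall t : int,
  exists (T : finType) (e : rel T),
    simple_graph e /\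
    t <= ((Delta2 e)%:Z) /\
    (maxn (omega e) (Delta2 e) < chi e)%N.
Proof.
move=> t; pose n := (absz t).+1.
have n_gt0 : (0 < n)%N by [].
exists (hub_vertex n), (@hub_adj n); split; first exact: hub_adj_simple.
rewrite Delta2_hub_adj //; split.
  apply: le_trans (ler_norm t) _; rewrite -abszE lez_nat /n; lia.
by rewrite gtn_max chi_hub_adj (leq_ltn_trans (omega_hub_adj n_gt0) (chi_hub_adj n)).
Qed.
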